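(* In an $a^2bc$-tiling, at every vertex the numbers of copies of $\beta$, of $\gamma$ and of $\delta$ have the same parity (all even or all odd). Consequently every vertex containing $\alpha$ has even numbers of $\beta$, $\gamma$, $\delta$.
   Context: An $a^2bc$-quadrilateral is a simple spherical quadrilateral with edges $a,a,b,c$ in cyclic order, $a,b,c$ pairwise distinct; $\alpha$ = angle between the two $a$-edges; $\beta$ = angle between an $a$-edge and the $b$-edge; $\delta$ = angle between the $b$-edge and the $c$-edge; $\gamma$ = angle between the $c$-edge and an $a$-edge. An $a^2bc$-tiling is an edge-to-edge tiling of the sphere by $f$ congruent copies of such a quadrilateral with all vertices of degree $\ge3$. *)

From HB Require Import structures.
From mathcomp Require Import all_boot all_order all_algebra.
From mathcomp Require Import reals trigo.
Set Implicit Arguments. Unset Strict Implicit. Unset Printing Implicit Defensive.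
Import Order.TTheory GRing.Theory Num.Theory.

(* Around the prototile the corners
   come in the cyclic order alpha, beta, delta, gamma, with edges
   alpha-beta : a,  beta-delta : b,  delta-gamma : c,  gamma-alpha : a. *)
Inductive angle := Alpha | Beta | Gamma | Delta.

Definition angle_to_ord (x : angle) : 'I_4 :=
  match x with
  | Alpha => @Ordinal 4 0 isT | Beta => @Ordinal 4 1 isT
  | Gamma => @Ordinal 4 2 isT | Delta => @Ordinal 4 3 isT end.
Definition ord_to_angle (i : 'I_4) : angle :=
  match val i with 0 => Alpha | 1 => Beta | 2 => Gamma | _ => Delta end.
Lemma angle_ordK : cancel angle_to_ord ord_to_angle. Proof. by case. Qed.
HB.instance Definition _ := Finite.copy angle (can_type angle_ordK).

Definition nxt (x : angle) : angle :=
  match x with Alpha => Beta | Beta => Delta | Delta => Gamma | Gamma => Alpha end.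

(* the side of a tile "starting at corner x" joins corner x to corner nxt x;
   its length in the prototile with edges a,a,b,c *)
Definition side_len (R : Type) (a b c : R) (x : angle) : R :=
  match x with Alpha => a | Beta => b | Delta => c | Gamma => a end.

Section Tiling.
Variables (R : realType) (a b c : R) (T V : finType).
(* vert t x : the vertex of the tiling at which the x-corner of tile t sits *)
Variable vert : T -> angle -> V.
(* glue s : the tile side glued to tile side s (edge-to-edge pairing);
   a tile side is a pair (t, x) denoting the side from corner x to nxt x *)
Variable glue : T * angle -> T * angle.
Variable ang : angle -> R.

Definition corner_vert (k : T * angle) : V := vert k.1 k.2.
Definition side_ends (s : T * angle) : V * V := (vert s.1 s.2, vert s.1 (nxt s.2)).

Definition on_side (k s : T * angle) : bool :=
  (k.1 == s.1) && ((k.2 == s.2) || (k.2 == nxt s.2)).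

(* two corners at the same vertex are adjacent around that vertex when they
   lie on two tile sides that are glued together *)
Definition corner_adj (k1 k2 : T * angle) : bool :=
  (corner_vert k1 == corner_vert k2) &&
  [exists s : T * angle, on_side k1 s && on_side k2 (glue s)].

Definition tile_adj (t1 t2 : T) : bool :=
  [exists x : angle, (glue (t1, x)).1 == t2].

Definition nang (v : V) (x : angle) : nat := #|[set t : T | vert t x == v]|.

Definition a2bc_tiling : Prop :=
  [/\
      [/\ a != b, b != c & a != c],
      (* each tile is a simple quadrilateral: its four corners are distinct vertices *)
      (forall t, injective (vert t)),
      [/\ (forall s, glue (glue s) = s), (forall s, glue s != s),
          (forall s, let e := side_ends s in let e' := side_ends (glue s) in
             e' = e \/ e' = (e.2, e.1))
        & (forall s, side_len a b c (glue s).2 = side_len a b c s.2)],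
      (forall v : V, 3 <= #|[set k : T * angle | corner_vert k == v]|) /\
      (* angle values: positive; the angles at each vertex sum to 2 pi;
         the angle sum of the spherical quadrilateral exceeds 2 pi
         (its area, by Gauss-Bonnet, is positive) *)
      [/\ (forall x, 0 < ang x)%R,
          (forall v : V,
             \sum_(k : T * angle | corner_vert k == v) ang k.2 = 2 * pi)%R
        & (2 * pi < ang Alpha + ang Beta + ang Gamma + ang Delta)%R] &
      (* surface/sphere conditions: the corners around each vertex form one
         cycle, the tiling is connected, and Euler's formula V - E + F = 2
         holds (E = 2F for quadrilaterals) *)
      [/\ (forall k1 k2 : T * angle, corner_vert k1 = corner_vert k2 ->
             connect corner_adj k1 k2),
          (forall t1 t2 : T, connect tile_adj t1 t2)
        & #|V| = #|T| + 2]].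

End Tiling.

From mathcomp Require Import all_boot all_order all_algebra.
From mathcomp Require Import reals trigo.
Set Implicit Arguments. Unset Strict Implicit. Unset Printing Implicit Defensive.
Import Order.TTheory GRing.Theory Num.Theory.

(* The b-edges are the sides starting at beta, the c-edges those starting at
   delta.  Since a, b, c are distinct, gluing pairs b-edges with b-edges, so
   the b-edges incident to a vertex v come in pairs: their number, which is
   #beta(v) + #delta(v) because no edge has both ends at v, is even.  The
   same holds for c-edges and #delta(v) + #gamma(v).  If alpha occurred at v
   together with odd (hence nonzero) numbers of beta, gamma and delta, the
   angle sum at v would be at least alpha + beta + gamma + delta > 2 pi. *)

Lemma even_card_fixfree_involution (X : finType) (g : X -> X) (S : {set X}) :
  involutive g -> (forall x, g x != x) -> {in S, forall x, g x \in S} ->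
  ~~ odd #|S|.
Proof.
move=> gK gN; elim: {S}_.+1 {-2}S (ltnSn #|S|) => // n IHn S ltSn gS.
have [-> | [x xS]] := set_0Vmem S; first by rewrite cards0.
have gxS := gS x xS.
have cardS : #|S| = (#|S :\ x :\ g x|).+2.
  by rewrite (cardsD1 x) xS (cardsD1 (g x)) !inE gN gxS.
rewrite cardS !oddS !negbK; apply: IHn; first by apply: ltnW; rewrite -ltnS -cardS.
move=> y; rewrite !inE => /and3P[ygx yx yS].
by rewrite (can_eq gK) yx (canF_eq gK) ygx gS.
Qed.

Lemma sum_angle (R : nmodType) (F : angle -> R) :
  (\sum_x F x = F Alpha + F Beta + F Gamma + F Delta)%R.
Proof.
rewrite (bigD1 Alpha) // (bigD1 Beta) // (bigD1 Gamma) // (bigD1 Delta) //=.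
by rewrite big_pred0 ?addr0 ?addrA //; case.
Qed.

Lemma nxt_neq (x : angle) : nxt x != x. Proof. by case: x. Qed.

Lemma side_len_inj (R : eqType) (a b c : R) (x y : angle) :
  [/\ a != b, b != c & a != c] -> x \in [:: Beta; Delta] ->
  side_len a b c y = side_len a b c x -> y = x.
Proof.
by case=> ab bc ac; case: x => //= _; case: y => //= /eqP;
  rewrite ?eqxx // ?(eq_sym b) ?(eq_sym c) ?(negPf ab) ?(negPf bc) ?(negPf ac).
Qed.

Section Vertex.
Variables (T V : finType) (vert : T -> angle -> V) (v : V).

Definition side_at (s : T * angle) : bool :=
  (vert s.1 s.2 == v) || (vert s.1 (nxt s.2) == v).

Lemma side_at_glue (glue : T * angle -> T * angle) (s : T * angle) :
  let e := side_ends vert s in let e' := side_ends vert (glue s) in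
  e' = e \/ e' = (e.2, e.1) -> side_at (glue s) = side_at s.
Proof. by rewrite /side_at /side_ends /= => -[] [-> ->] //; rewrite orbC. Qed.

Lemma card_sides_at (x : angle) : (forall t, injective (vert t)) ->
  #|[set s | (s.2 == x) && side_at s]| = nang vert v x + nang vert v (nxt x).
Proof.
move=> inj; pose A y := [set t | vert t y == v].
have -> : [set s | (s.2 == x) && side_at s] = (fun t => (t, x)) @: (A x :|: A (nxt x)).
  apply/setP => -[t y]; rewrite !inE /side_at /=.
  apply/andP/imsetP => [[/eqP -> At] | [t' At' [-> ->]]]; first by exists t; rewrite ?inE.
  by move: At'; rewrite !inE.
rewrite card_imset => [|t1 t2 [] //]; rewrite cardsU.
suff -> : A x :&: A (nxt x) = set0 by rewrite cards0 subn0.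
apply/setP => t; rewrite !inE; apply/negP => /andP[/eqP vx /eqP vnx].
by move: (nxt_neq x); rewrite (inj t (nxt x) x) ?eqxx // vx vnx.
Qed.

Lemma sum_corners_at (R : nmodType) (F : angle -> R) :
  (\sum_(k | corner_vert vert k == v) F k.2 = \sum_x F x *+ nang vert v x)%R.
Proof.
transitivity (\sum_x \sum_(t | vert t x == v) F x)%R; last first.
  by apply: eq_bigr => x _; rewrite -sumr_const; apply: eq_bigl => t; rewrite inE.
by rewrite (exchange_big_dep xpredT) //= pair_big_dep.
Qed.

Lemma sum_angle_le_sum_corners (R : numDomainType) (ang : angle -> R) :
  (forall x, 0 <= ang x)%R -> (forall x, 0 < nang vert v x) ->
  (\sum_x ang x <= \sum_(k | corner_vert vert k == v) ang k.2)%R.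
Proof.
move=> ang_ge0 nang_gt0; rewrite sum_corners_at; apply: ler_sum => x _.
by rewrite -{1}(mulr1n (ang x)) ler_wpMn2l.
Qed.

End Vertex.

Section Gluing.
Variables (R : eqType) (a b c : R) (T V : finType).
Variables (vert : T -> angle -> V) (glue : T * angle -> T * angle).
Hypotheses (abc : [/\ a != b, b != c & a != c]) (vert_inj : forall t, injective (vert t)).
Hypotheses (glueK : involutive glue) (glue_neq : forall s, glue s != s).
Hypothesis glue_ends : forall s,
  let e := side_ends vert s in let e' := side_ends vert (glue s) in
  e' = e \/ e' = (e.2, e.1).
Hypothesis glue_len : forall s, side_len a b c (glue s).2 = side_len a b c s.2.

Lemma odd_nang_nxt (v : V) (x : angle) : x \in [:: Beta; Delta] ->
  odd (nang vert v x) = odd (nang vert v (nxt x)).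
Proof.
move=> xBD; apply/eqP; rewrite -negb_add -oddD -card_sides_at //.
apply: (@even_card_fixfree_involution _ glue) => // s.
rewrite !inE side_at_glue // => /andP[/eqP sx ->].
by rewrite (side_len_inj abc _ (glue_len s)) sx ?eqxx.
Qed.

End Gluing.

Theorem lemma6 (R : realType) (a b c : R) (T V : finType)
    (vert : T -> angle -> V) (glue : T * angle -> T * angle)
    (ang : angle -> R) :
  a2bc_tiling a b c vert glue ang ->
  forall v : V,
    (odd (nang vert v Beta) = odd (nang vert v Gamma) /\
     odd (nang vert v Gamma) = odd (nang vert v Delta)) /\
    (0 < nang vert v Alpha ->
       [/\ ~~ odd (nang vert v Beta), ~~ odd (nang vert v Gamma)
         & ~~ odd (nang vert v Delta)]).
Proof.
move=> [abc inj [gK gN gE gL] [_ [ang_gt0 ang_sum ang_big]] _] v.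
have oBD : odd (nang vert v Beta) = odd (nang vert v Delta).
  exact: (odd_nang_nxt abc inj gK gN gE gL v (x := Beta)).
have oDG : odd (nang vert v Delta) = odd (nang vert v Gamma).
  exact: (odd_nang_nxt abc inj gK gN gE gL v (x := Delta)).
split; first by rewrite oBD oDG.
move=> nA_gt0; rewrite oBD oDG; suff: ~~ odd (nang vert v Gamma) by move=> ->.
apply/negP => oddG; have nang_gt0 x : 0 < nang vert v x.
  by case: x => //; apply: odd_gt0; rewrite ?oBD ?oDG.
move: ang_big; apply/negP; rewrite -leNgt -(ang_sum v) -sum_angle.
by apply: sum_angle_le_sum_corners => // x; apply: ltW.
Qed.
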